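(* Let $\mathcal{V}$ be a braided monoidal closed category with products and coproducts, with internal hom $[-,-]$. Let $\mathcal{V}\text{-}\mathcal{M}\mathrm{at}_1$ be the category whose objects are $\mathcal{V}$-matrices $S\colon X\nrightarrow Y$ between arbitrary sets and whose morphisms $(S\colon X\nrightarrow Y)\to(T\colon Z\nrightarrow W)$ are triples $(f,g,\alpha)$ with functions $f\colon X\to Z$, $g\colon Y\to W$ and arrows $\alpha_{x,y}\colon S(x,y)\to T(fx,gy)$ in $\mathcal{V}$, with monoidal structure $\otimes_1$ given by $(S\otimes_1T)((x,z),(y,w))=S(x,y)\otimes T(z,w)$ for $S\colon X\nrightarrow Y$, $T\colon Z\nrightarrow W$ (a matrix $X\times Z\nrightarrow Y\times W$, pointwise on morphisms) and unit the matrix $\{*\}\nrightarrow\{*\}$ with value $I$. Define $H_1(S,T)\colon Z^X\nrightarrow W^Y$ by $H_1(S,T)(n,m)=\prod_{x\in X,y\in Y}[S(x,y),T(n(x),m(y))]$ for $n\in Z^X$, $m\in W^Y$, extended to morphisms as described in the context. Then $H_1$ is an internal hom for $(\mathcal{V}\text{-}\mathcal{M}\mathrm{at}_1,\otimes_1)$: for every $\mathcal{V}$-matrix $T$ there is an adjunction $-\otimes_1T\dashv H_1(T,-)$.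
   Context: For sets $X,Y$, a $\mathcal{V}$-matrix $S\colon X\nrightarrow Y$ is a family of objects $S(x,y)\in\mathcal{V}$, $(x,y)\in X\times Y$. On morphisms, for $(f,g,\alpha)\colon S\to S'$ (with $S'\colon X'\nrightarrow Y'$, contravariant variable) and $(h,k,\beta)\colon T\to T'$ ($T\colon Z\nrightarrow W$, $T'\colon Z'\nrightarrow W'$), $H_1((f,g,\alpha),(h,k,\beta))$ has underlying functions $h^f\colon Z^X\to Z'^{X'}$, $n\mapsto h\circ n\circ f$ and $k^g\colon W^Y\to W'^{Y'}$, $m\mapsto k\circ m\circ g$, and components $\prod_{x,y}[S(x,y),T(nx,my)]\to\prod_{x',y'}[S'(x',y'),T'(hnfx',kmgy')]$ whose $(x',y')$-component is the transpose of: project to $[S(fx',gy'),T(nfx',mgy')]$, precompose with $\alpha_{x',y'}\colon S'(x',y')\to S(fx',gy')$, evaluate, and postcompose with $\beta_{nfx',mgy'}$. (In this description morphisms of the first variable go $S'\to S$ over $f\colon X'\to X$, $g\colon Y'\to Y$.) *)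

Record Category := {
  ob :> Type;
  hom : ob -> ob -> Type;
  idm : forall a, hom a a;
  comp : forall x y z, hom y z -> hom x y -> hom x z;
  comp_id_l : forall a b (f : hom a b), comp a b b (idm b) f = f;
  comp_id_r : forall a b (f : hom a b), comp a a b f (idm a) = f;
  comp_assoc : forall a b c d (f : hom c d) (g : hom b c) (h : hom a b),
      comp a c d f (comp a b c g h) = comp a b d (comp b c d f g) h
}.
Arguments hom {_} _ _.
Arguments idm {_} _.
Arguments comp {_ x y z} _ _.

Notation "g ∘ f" := (comp g f) (at level 40, left associativity).

Record Monoidal (C : Category) := {
  tens : C -> C -> C;
  tensm : forall a b c d, hom a b -> hom c d -> hom (tens a c) (tens b d);
  tens_id : forall a c, tensm a a c c (idm a) (idm c) = idm (tens a c);
  tens_comp : forall a b e c d g (f : hom a b) (f' : hom b e) (h : hom c d) (h' : hom d g),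
      tensm a e c g (f' ∘ f) (h' ∘ h) = tensm b e d g f' h' ∘ tensm a b c d f h;
  munit : C;
  assoc : forall a b c, hom (tens (tens a b) c) (tens a (tens b c));
  assoc_inv : forall a b c, hom (tens a (tens b c)) (tens (tens a b) c);
  assoc_iso1 : forall a b c, assoc_inv a b c ∘ assoc a b c = idm _;
  assoc_iso2 : forall a b c, assoc a b c ∘ assoc_inv a b c = idm _;
  assoc_nat : forall a a' b b' c c' (f : hom a a') (g : hom b b') (h : hom c c'),
      assoc a' b' c' ∘ tensm _ _ _ _ (tensm _ _ _ _ f g) h
      = tensm _ _ _ _ f (tensm _ _ _ _ g h) ∘ assoc a b c;
  lunit : forall a, hom (tens munit a) a;
  lunit_inv : forall a, hom a (tens munit a);
  lunit_iso1 : forall a, lunit_inv a ∘ lunit a = idm _;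
  lunit_iso2 : forall a, lunit a ∘ lunit_inv a = idm _;
  lunit_nat : forall a b (f : hom a b),
      f ∘ lunit a = lunit b ∘ tensm _ _ _ _ (idm munit) f;
  runit : forall a, hom (tens a munit) a;
  runit_inv : forall a, hom a (tens a munit);
  runit_iso1 : forall a, runit_inv a ∘ runit a = idm _;
  runit_iso2 : forall a, runit a ∘ runit_inv a = idm _;
  runit_nat : forall a b (f : hom a b),
      f ∘ runit a = runit b ∘ tensm _ _ _ _ f (idm munit);
  pentagon : forall a b c d,
      tensm _ _ _ _ (idm a) (assoc b c d) ∘ assoc a (tens b c) d
        ∘ tensm _ _ _ _ (assoc a b c) (idm d)
      = assoc a b (tens c d) ∘ assoc (tens a b) c d;
  triangle : forall a b,
      tensm _ _ _ _ (idm a) (lunit b) ∘ assoc a munit b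
      = tensm _ _ _ _ (runit a) (idm b)
}.
Arguments tens {C} _ _ _.
Arguments tensm {C} _ {a b c d} _ _.
Arguments munit {C} _.
Arguments assoc {C} _ _ _ _.
Arguments assoc_inv {C} _ _ _ _.

Record Braiding (C : Category) (M : Monoidal C) := {
  braid : forall a b, hom (tens M a b) (tens M b a);
  braid_inv : forall a b, hom (tens M b a) (tens M a b);
  braid_iso1 : forall a b, braid_inv a b ∘ braid a b = idm _;
  braid_iso2 : forall a b, braid a b ∘ braid_inv a b = idm _;
  braid_nat : forall a a' b b' (f : hom a a') (g : hom b b'),
      braid a' b' ∘ tensm M f g = tensm M g f ∘ braid a b;
  hexagon1 : forall a b c,
      assoc M b c a ∘ braid a (tens M b c) ∘ assoc M a b c
      = tensm M (idm b) (braid a c) ∘ assoc M b a c ∘ tensm M (braid a b) (idm c);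
  hexagon2 : forall a b c,
      assoc_inv M c a b ∘ braid (tens M a b) c ∘ assoc_inv M a b c
      = tensm M (braid a c) (idm b) ∘ assoc_inv M a c b ∘ tensm M (idm a) (braid b c)
}.

Record Closed (C : Category) (M : Monoidal C) := {
  ihom : C -> C -> C;
  ev : forall b c, hom (tens M (ihom b c) b) c;
  curry : forall a b c, hom (tens M a b) c -> hom a (ihom b c);
  ev_curry : forall a b c (f : hom (tens M a b) c),
      ev b c ∘ tensm M (curry a b c f) (idm b) = f;
  curry_ev : forall a b c (g : hom a (ihom b c)),
      curry a b c (ev b c ∘ tensm M g (idm b)) = g
}.
Arguments ihom {C M} _ _ _.
Arguments ev {C M} _ _ _.
Arguments curry {C M} _ {a b c} _.

Record Products (C : Category) := {
  prod : forall (I : Type), (I -> C) -> C;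
  proj : forall I (A : I -> C) (i : I), hom (prod I A) (A i);
  tuple : forall I (A : I -> C) (c : C), (forall i, hom c (A i)) -> hom c (prod I A);
  proj_tuple : forall I A c (fs : forall i, hom c (A i)) i,
      proj I A i ∘ tuple I A c fs = fs i;
  tuple_unique : forall I A c (fs : forall i, hom c (A i)) (g : hom c (prod I A)),
      (forall i, proj I A i ∘ g = fs i) -> g = tuple I A c fs
}.
Arguments prod {C} _ {I} _.
Arguments proj {C} _ {I A} _.
Arguments tuple {C} _ {I A c} _.

Record Coproducts (C : Category) := {
  coprod : forall (I : Type), (I -> C) -> C;
  inj : forall I (A : I -> C) (i : I), hom (A i) (coprod I A);
  cotuple : forall I (A : I -> C) (c : C), (forall i, hom (A i) c) -> hom (coprod I A) c;
  cotuple_inj : forall I A c (fs : forall i, hom (A i) c) i,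
      cotuple I A c fs ∘ inj I A i = fs i;
  cotuple_unique : forall I A c (fs : forall i, hom (A i) c) (g : hom (coprod I A) c),
      (forall i, g ∘ inj I A i = fs i) -> g = cotuple I A c fs
}.

Record VMatrix (V : Category) := {
  mdom : Type;
  mcod : Type;
  mval : mdom -> mcod -> V
}.
Arguments mdom {V} _.
Arguments mcod {V} _.
Arguments mval {V} _ _ _.

Record MatHom (V : Category) (S T : VMatrix V) := {
  mf : mdom S -> mdom T;
  mg : mcod S -> mcod T;
  malpha : forall x y, hom (mval S x y) (mval T (mf x) (mg y))
}.
Arguments mf {V S T} _ _.
Arguments mg {V S T} _ _.
Arguments malpha {V S T} _ _ _.

Definition mat_id {V : Category} (S : VMatrix V) : MatHom V S S :=
  {| mf := fun x => x; mg := fun y => y; malpha := fun x y => idm (mval S x y) |}.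

Definition mat_comp {V : Category} {S T U : VMatrix V}
  (b : MatHom V T U) (a : MatHom V S T) : MatHom V S U :=
  {| mf := fun x => mf b (mf a x);
     mg := fun y => mg b (mg a y);
     malpha := fun x y => malpha b (mf a x) (mg a y) ∘ malpha a x y |}.

Definition tensor1 {V : Category} (M : Monoidal V) (S T : VMatrix V) : VMatrix V :=
  {| mdom := (mdom S * mdom T)%type;
     mcod := (mcod S * mcod T)%type;
     mval := fun p q => tens M (mval S (fst p) (fst q)) (mval T (snd p) (snd q)) |}.

Definition tensor1_map {V : Category} (M : Monoidal V) {S S' T T' : VMatrix V}
  (a : MatHom V S S') (b : MatHom V T T') :
  MatHom V (tensor1 M S T) (tensor1 M S' T') :=
  Build_MatHom V (tensor1 M S T) (tensor1 M S' T')
    (fun p : mdom S * mdom T => (mf a (fst p), mf b (snd p)))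
    (fun q : mcod S * mcod T => (mg a (fst q), mg b (snd q)))
    (fun (p : mdom S * mdom T) (q : mcod S * mcod T) =>
       tensm M (malpha a (fst p) (fst q)) (malpha b (snd p) (snd q))).

Definition unit1 {V : Category} (M : Monoidal V) : VMatrix V :=
  {| mdom := unit; mcod := unit; mval := fun _ _ => munit M |}.

Definition H1 {V : Category} {M : Monoidal V} (Cl : Closed V M) (P : Products V)
  (S T : VMatrix V) : VMatrix V :=
  {| mdom := mdom S -> mdom T;
     mcod := mcod S -> mcod T;
     mval := fun n m =>
       prod P (fun xy : mdom S * mcod S =>
                 ihom Cl (mval S (fst xy) (snd xy)) (mval T (n (fst xy)) (m (snd xy)))) |}.

Definition H1_map {V : Category} {M : Monoidal V} (Cl : Closed V M) (P : Products V)
  {S S' T T' : VMatrix V} (a : MatHom V S' S) (b : MatHom V T T') :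
  MatHom V (H1 Cl P S T) (H1 Cl P S' T') :=
  Build_MatHom V (H1 Cl P S T) (H1 Cl P S' T')
    (fun (n : mdom S -> mdom T) (x' : mdom S') => mf b (n (mf a x')))
    (fun (m : mcod S -> mcod T) (y' : mcod S') => mg b (m (mg a y')))
    (fun (n : mdom S -> mdom T) (m : mcod S -> mcod T) =>
       tuple P (fun xy' : mdom S' * mcod S' =>
         curry Cl
           (malpha b (n (mf a (fst xy'))) (m (mg a (snd xy')))
            ∘ ev Cl (mval S (mf a (fst xy')) (mg a (snd xy')))
                    (mval T (n (mf a (fst xy'))) (m (mg a (snd xy'))))
            ∘ tensm M
                (proj P (A := fun xy : mdom S * mcod S =>
                   ihom Cl (mval S (fst xy) (snd xy)) (mval T (n (fst xy)) (m (snd xy))))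
                   (mf a (fst xy'), mg a (snd xy')))
                (malpha a (fst xy') (snd xy'))))).

Definition tensor1_H1_adjunction {V : Category} (M : Monoidal V) (Cl : Closed V M)
  (P : Products V) (T : VMatrix V) : Prop :=
  exists (phi : forall S U : VMatrix V,
                  MatHom V (tensor1 M S T) U -> MatHom V S (H1 Cl P T U))
         (psi : forall S U : VMatrix V,
                  MatHom V S (H1 Cl P T U) -> MatHom V (tensor1 M S T) U),
    (forall S U e, psi S U (phi S U e) = e) /\
    (forall S U d, phi S U (psi S U d) = d) /\
    (forall (S S' U U' : VMatrix V) (k : MatHom V S' S) (h : MatHom V U U')
            (e : MatHom V (tensor1 M S T) U),
        phi S' U' (mat_comp h (mat_comp e (tensor1_map M k (mat_id T))))
        = mat_comp (H1_map Cl P (mat_id T) h) (mat_comp (phi S U e) k)).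

From Stdlib Require Import FunctionalExtensionality Eqdep.

(* [H_1(T,U)(n,m)] is the product over [(t,t')] of the internal homs
   [[T(t,t'), U(n t, m t')]].  Hence a morphism [S -> H_1(T,U)] amounts to
   curried index maps together with, for all [s, s', t, t'], transposes of
   arrows [S(s,s') ⊗ T(t,t') -> U(..)]: exactly a morphism [S ⊗_1 T -> U].
   Naturality reduces to naturality of currying in V. *)

Section MatHomExt.
Variable V : Category.

Definition hom_cast (U : VMatrix V) {c : V} {a a' : mdom U} {b b' : mcod U}
  (ea : a = a') (eb : b = b') (h : hom c (mval U a b)) : hom c (mval U a' b') :=
  match ea in _ = a1 return hom c (mval U a1 b') with
  | eq_refl => match eb in _ = b1 return hom c (mval U a b1) with
               | eq_refl => h end end.

Lemma hom_cast_refl (U : VMatrix V) (c : V) (a : mdom U) (b : mcod U)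
  (ea : a = a) (eb : b = b) (h : hom c (mval U a b)) :
  hom_cast U ea eb h = h.
Proof. rewrite (UIP_refl _ _ ea), (UIP_refl _ _ eb). reflexivity. Qed.

Lemma MatHom_ext (S U : VMatrix V) (m1 m2 : MatHom V S U)
  (ef : forall x, mf m1 x = mf m2 x) (eg : forall y, mg m1 y = mg m2 y) :
  (forall x y, hom_cast U (ef x) (eg y) (malpha m1 x y) = malpha m2 x y) ->
  m1 = m2.
Proof.
  destruct m1 as [f1 g1 a1], m2 as [f2 g2 a2]; simpl in *.
  assert (f1 = f2) by (apply functional_extensionality; exact ef).
  assert (g1 = g2) by (apply functional_extensionality; exact eg).
  subst f2 g2; intros ea.
  assert (a1 = a2) as ->; [|reflexivity].
  apply functional_extensionality_dep; intro x.
  apply functional_extensionality_dep; intro y.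
  rewrite <- ea, hom_cast_refl. reflexivity.
Qed.

End MatHomExt.

Section ClosedFacts.
Variables (V : Category) (M : Monoidal V) (Cl : Closed V M).

Lemma tensm_comp_idm (a a' a'' b : V) (f : hom a' a'') (g : hom a a') :
  tensm M (f ∘ g) (idm b) = tensm M f (idm b) ∘ tensm M g (idm b).
Proof. rewrite <- tens_comp, comp_id_l. reflexivity. Qed.

Lemma ev_tensm_curry_comp (a a' b c : V) (f : hom (tens M a b) c) (g : hom a' a) :
  ev Cl b c ∘ tensm M (curry Cl f ∘ g) (idm b) = f ∘ tensm M g (idm b).
Proof. rewrite tensm_comp_idm, comp_assoc, ev_curry. reflexivity. Qed.

Lemma curry_comp (a a' b c : V) (f : hom (tens M a b) c) (g : hom a' a) :
  curry Cl f ∘ g = curry Cl (f ∘ tensm M g (idm b)).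
Proof. rewrite <- ev_tensm_curry_comp, curry_ev. reflexivity. Qed.

End ClosedFacts.

(* A plain [rewrite proj_tuple] fails: the goal contains [A i] beta-reduced,
   and unification then solves [?A ?i] with a constant family. *)
Ltac rewrite_proj_tuple :=
  match goal with
  | |- context [@proj _ ?P _ ?A ?i] => rewrite (proj_tuple _ P _ A _ _ i)
  end.

Section Transpose.
Variables (V : Category) (M : Monoidal V) (Cl : Closed V M) (P : Products V)
  (T : VMatrix V).

Definition transpose1 {S U : VMatrix V} (e : MatHom V (tensor1 M S T) U) :
  MatHom V S (H1 Cl P T U) :=
  Build_MatHom V S (H1 Cl P T U)
    (fun s t => mf e (s, t)) (fun s' t' => mg e (s', t'))
    (fun s s' =>
       tuple P (c := mval S s s')
         (fun tt' : mdom T * mcod T => curry Cl (malpha e (s, fst tt') (s', snd tt')))).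

Definition untranspose1 {S U : VMatrix V} (d : MatHom V S (H1 Cl P T U)) :
  MatHom V (tensor1 M S T) U :=
  Build_MatHom V (tensor1 M S T) U
    (fun p => mf d (fst p) (snd p)) (fun q => mg d (fst q) (snd q))
    (fun p q => ev Cl _ _ ∘ tensm M (proj P (snd p, snd q) ∘ malpha d (fst p) (fst q))
                                    (idm _)).

Lemma transpose1K (S U : VMatrix V) (e : MatHom V (tensor1 M S T) U) :
  untranspose1 (transpose1 e) = e.
Proof.
  (* The index maps agree only up to surjective pairing, hence the casts. *)
  unshelve eapply MatHom_ext.
  - intro p; exact (f_equal (mf e) (eq_sym (surjective_pairing p))).
  - intro q; exact (f_equal (mg e) (eq_sym (surjective_pairing q))).
  - intros [s t] [s' t']; rewrite hom_cast_refl; simpl.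
    etransitivity; [|apply ev_curry].
    do 2 f_equal. rewrite_proj_tuple. reflexivity.
Qed.

Lemma untranspose1K (S U : VMatrix V) (d : MatHom V S (H1 Cl P T U)) :
  transpose1 (untranspose1 d) = d.
Proof.
  unshelve eapply MatHom_ext; [intro; reflexivity | intro; reflexivity |].
  intros s s'; simpl.
  symmetry; apply tuple_unique; intros [t t']; simpl.
  symmetry; apply curry_ev.
Qed.

Lemma transpose1_natural (S S' U U' : VMatrix V) (k : MatHom V S' S)
  (h : MatHom V U U') (e : MatHom V (tensor1 M S T) U) :
  transpose1 (mat_comp h (mat_comp e (tensor1_map M k (mat_id T))))
  = mat_comp (H1_map Cl P (mat_id T) h) (mat_comp (transpose1 e) k).
Proof.
  unshelve eapply MatHom_ext; [intro; reflexivity | intro; reflexivity |].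
  intros s s'; simpl.
  symmetry; apply tuple_unique; intros [t t']; simpl.
  rewrite comp_assoc; rewrite_proj_tuple; simpl.
  rewrite curry_comp; f_equal.
  rewrite <- !comp_assoc; f_equal.
  rewrite <- tensm_comp_idm, comp_assoc; rewrite_proj_tuple; simpl.
  apply ev_tensm_curry_comp.
Qed.

End Transpose.

Theorem proposition4p3 (V : Category) (M : Monoidal V) (B : Braiding V M)
  (Cl : Closed V M) (P : Products V) (Cp : Coproducts V) (T : VMatrix V) :
  tensor1_H1_adjunction M Cl P T.
Proof.
  exists (@transpose1 V M Cl P T), (@untranspose1 V M Cl P T).
  split; [|split].
  - apply transpose1K.
  - apply untranspose1K.
  - apply transpose1_natural.
Qed.
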